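(* For every $t=0,1,\dots,T-1$, $H_t(s_t-\theta)\ge H_t(S_t)+K_t$.
   Context: Model. Fix an integer horizon $T\ge 2$, a discount factor $\alpha\in(0,1]$, and for $t=0,\dots,T-1$: unit ordering costs $c_t\in\mathbb R$, a salvage coefficient $c_T\in\mathbb R$, setup costs $K_t\ge 0$, functions $G_t:\mathbb R\to\mathbb R$, and independent nonnegative random demands $D_0,\dots,D_{T-1}$ with right-continuous distribution functions $F_t$ and finite means; all expectations appearing are assumed finite. Put $C_t(y)=(c_t-\alpha c_{t+1})y+G_t(y)+\alpha c_{t+1}E[D_t]$. Standing assumptions: (i) each $C_t$ is convex with $C_t(y)\to+\infty$ as $|y|\to\infty$; (ii) $K_t\ge \alpha K_{t+1}$ for $t=0,\dots,T-2$. Grid construction. Fix $\theta>0$, $z_m=m\theta$, $Z_\theta=\{z_m:m\in\mathbb Z\}$, $f_t(n)=F_t(z_{n+1})-F_t(z_n)$ ($n\ge -1$). $C^m_t=\min\{y: C_t(y)=\min_x C_t(x)\}$; with $z_{n_0}<C^m_t\le z_{n_0+1}$, $S^U_t=\min\{z_m\in Z_\theta: z_m\ge C^m_t,\ C_t(z_m)>C_t(z_{n_0})+K_t\}$. $s_{T-1}$ is a point with $s_{T-1}\le C^m_{T-1}$, $C_{T-1}(s_{T-1})=C_{T-1}(C^m_{T-1})+K_{T-1}$; $\bar I_{T-1}=s_{T-1}$. For $t=T-2,\dots,0$: $I_t=\max\{z_m\in Z_\theta: z_m<\min(\bar I_{t+1}-\theta,C^m_t)\}$, $\bar I_t=\max\{z_m\in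 Z_\theta: z_m\le I_t,\ C_t(z_m)>C_t(I_t)+K_t\}+\theta$. $H_{T-1}=C_{T-1}$, $S_{T-1}=C^m_{T-1}$; $V_t(y)=H_t(S_t)+K_t$ for $y<s_t$, $V_t(y)=H_t(y)$ for $y\ge s_t$. For $t=T-2,\dots,0$: $H_t(y)=C_t(y)+\alpha\sum_{n=-1}^\infty V_{t+1}(y-z_n)f_t(n)$; $S_t=\max\{z_m\in Z_\theta: I_t\le z_m\le S^U_t,\ H_t(z_m)=\min\{H_t(z_n):z_n\in Z_\theta, I_t\le z_n\le S^U_t\}\}$; $s_t=S_t$ if $K_t=0$, else $s_t=\min\{z_m\in Z_\theta:\bar I_t\le z_m\le S_t,\ H_t(z_m)\le H_t(S_t)+K_t\}$. *)

From HB Require Import structures.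
From mathcomp Require Import all_boot all_order all_algebra.
From mathcomp Require Import all_classical all_reals all_analysis.
Set Implicit Arguments.
Unset Strict Implicit.
Unset Printing Implicit Defensive.
Import Order.TTheory GRing.Theory Num.Theory.
Import numFieldNormedType.Exports.
Local Open Scope classical_set_scope.
Local Open Scope ring_scope.

Definition mutually_independent d (Om : measurableType d) (R : realType)
    (P : probability Om R) (X : nat -> {RV P >-> R}) (T : nat) : Prop :=
  forall (J : seq nat) (B : nat -> set R),
    uniq J -> all (fun j => (j < T)%N) J -> (forall j, measurable (B j)) ->
    P (\bigcap_(j in [set j | j \in J]) (X j @^-1` B j))
    = (\prod_(j <- J) P (X j @^-1` B j))%E.

Definition distr_fun d (Om : measurableType d) (R : realType)
    (P : probability Om R) (X : {RV P >-> R}) (x : R) : R :=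
  fine (cdf X x).

(** Mean E[D_t] as a real number (finiteness is a separate hypothesis). *)
Definition mean d (Om : measurableType d) (R : realType)
    (P : probability Om R) (X : {RV P >-> R}) : R :=
  fine ('E_P[X]).

Definition Cost d (Om : measurableType d) (R : realType)
    (P : probability Om R) (alpha : R) (c : nat -> R) (G : nat -> R -> R)
    (D : nat -> {RV P >-> R}) (t : nat) (y : R) : R :=
  (c t - alpha * c t.+1) * y + G t y + alpha * c t.+1 * mean (D t).

Definition convex_fun (R : realType) (f : R -> R) : Prop :=
  forall (x y l : R), 0 <= l <= 1 ->
    f (l * x + (1 - l) * y) <= l * f x + (1 - l) * f y.

Definition coercive (R : realType) (f : R -> R) : Prop :=
  (f x @[x --> +oo] --> +oo) /\ (f x @[x --> -oo] --> +oo).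

Definition least_minimizer (R : realType) (f : R -> R) (x : R) : Prop :=
  (forall z, f x <= f z) /\ (forall y, (forall z, f y <= f z) -> x <= y).

Definition zgrid (R : realType) (theta : R) (m : int) : R := m%:~R * theta.

Definition on_grid (R : realType) (theta x : R) : Prop :=
  exists m : int, x = zgrid theta m.

Definition grid_greatest (R : realType) (theta : R) (Q : R -> Prop) (x : R) :=
  [/\ on_grid theta x, Q x & forall y, on_grid theta y -> Q y -> y <= x].

Definition grid_least (R : realType) (theta : R) (Q : R -> Prop) (x : R) :=
  [/\ on_grid theta x, Q x & forall y, on_grid theta y -> Q y -> x <= y].

Definition fgrid (R : realType) (theta : R) (F : R -> R) (n : int) : R :=
  F (zgrid theta (n + 1)) - F (zgrid theta n).

Definition Vfun (R : realType) (H : R -> R) (S s K : R) (y : R) : R :=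
  if y < s then H S + K else H y.

(** sum_{n = -1}^oo W(y - z_n) f(n)  (index shift k = n + 1). *)
Definition grid_sum (R : realType) (theta : R) (W : R -> R) (f : int -> R)
    (y : R) : R :=
  limn [series W (y - zgrid theta (k%:Z - 1)) * f (k%:Z - 1)]_k.

From HB Require Import structures.
From mathcomp Require Import all_boot all_order all_algebra.
From mathcomp Require Import all_classical all_reals all_analysis.
From mathcomp Require Import lra zify.
Import Order.TTheory GRing.Theory Num.Theory.
Set Implicit Arguments.
Unset Strict Implicit.
Local Open Scope classical_set_scope.
Local Open Scope ring_scope.

(* Grid facts: consecutive grid points are at distance >= theta.
   2. A convex function is nonincreasing to the left of a minimizer.
   3. Since I_t + theta lies (weakly) below s_{t+1}, V_{t+1} equals the constant
      H_{t+1}(S_{t+1}) + K_{t+1} on (-oo, I_t + theta]; hence H_t - C_t is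
      constant on (-oo, I_t], so on that half-line H_t behaves like C_t.
   4. The bound then follows stage by stage: at t = T-1 from convexity of C;
      for K_t = 0 from the minimality of S_t on the grid (or step 3 when
      S_t = I_t); for K_t > 0 either s_t - theta was a rejected candidate of
      the minimization defining s_t, or s_t = Ibar_t, and the definition of
      Ibar_t together with step 3 gives the bound. *)

Section Grid.
Variables (R : realType) (theta : R).

Lemma on_grid_sub x : on_grid theta x -> on_grid theta (x - theta).
Proof. by case=> m ->; exists (m - 1); rewrite /zgrid intrB mulrBl mul1r. Qed.

Lemma on_grid_add x : on_grid theta x -> on_grid theta (x + theta).
Proof. by case=> m ->; exists (m + 1); rewrite /zgrid intrD mulrDl mul1r. Qed.

Hypothesis theta_gt0 : 0 < theta.

Lemma grid_gap a b :
  on_grid theta a -> on_grid theta b -> a < b -> a + theta <= b.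
Proof.
case=> [m ->] [n ->]; rewrite /zgrid ltr_pM2r // ltr_int -lezD1.
by rewrite -(ler_int R) -(ler_pM2r theta_gt0) intrD mulrDl mul1r.
Qed.

(* The grid sum only sees W on (-oo, y + theta]: if W is constant there,
   the sum takes the same value at all points y <= B. *)
Lemma grid_sum_flat (W : R -> R) (f : int -> R) (B v y1 y2 : R) :
  (forall x, x <= B + theta -> W x = v) -> y1 <= B -> y2 <= B ->
  grid_sum theta W f y1 = grid_sum theta W f y2.
Proof.
move=> W_flat le1 le2; rewrite /grid_sum.
suff -> : (fun k : nat => W (y1 - zgrid theta (k%:Z - 1)) * f (k%:Z - 1)) =
          (fun k : nat => W (y2 - zgrid theta (k%:Z - 1)) * f (k%:Z - 1)) by [].
apply/funext => i.
have zi : - theta <= zgrid theta (i%:Z - 1).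
  rewrite /zgrid intrB mulrBl mul1r lerBrDr addNr.
  by apply: mulr_ge0; rewrite ?ler0z // ltW.
have W_y y : y <= B -> W (y - zgrid theta (i%:Z - 1)) = v.
  by move=> yB; apply: W_flat; lra.
by rewrite !W_y.
Qed.

End Grid.

Lemma convex_nonincr_left (R : realType) (g : R -> R) (m x y : R) :
  convex_fun g -> (forall z, g m <= g z) -> x <= y -> y <= m -> g y <= g x.
Proof.
move=> g_cvx g_min xy ym.
have [x_m|xm] := eqVneq x m.
  by have -> : y = x by apply/eqP; rewrite eq_le xy x_m ym.
have mx_gt0 : 0 < m - x by rewrite subr_gt0 lt_neqAle xm (le_trans xy ym).
pose l := (m - y) / (m - x).
have lmx : l * (m - x) = m - y by rewrite /l divfK // gt_eqF.
have l01 : 0 <= l <= 1 by apply/andP; split; nra.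
have y_comb : l * x + (1 - l) * m = y by nra.
have := g_cvx x m l l01; rewrite y_comb => /le_trans; apply.
by have := g_min x; move: l01 => /andP[? ?]; nra.
Qed.

Lemma Vfun_below (R : realType) (h : R -> R) (S s k y : R) :
  y < s -> Vfun h S s k y = h S + k.
Proof. by move=> ys; rewrite /Vfun ys. Qed.

Lemma Vfun_below_free (R : realType) (h : R -> R) (S y : R) :
  y <= S -> Vfun h S S 0 y = h S + 0.
Proof. by rewrite /Vfun le_eqVlt => /predU1P[->|->]; rewrite ?ltxx ?addr0. Qed.

Section Thresholds.
Variables (R : realType) (T : nat) (alpha theta : R) (K : nat -> R).
Variables (C H : nat -> R -> R) (f : nat -> int -> R).
Variables (Cm SU I Ibar S s : nat -> R).

Hypothesis T_gt0 : (0 < T)%N.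
Hypothesis theta_gt0 : 0 < theta.
Hypothesis C_convex : forall t, (t < T)%N -> convex_fun (C t).
Hypothesis Cm_min : forall t, (t < T)%N -> forall z, C t (Cm t) <= C t z.
Hypothesis Cm_le_SU : forall t, (t < T)%N -> Cm t <= SU t.
Hypothesis s_last_le : s T.-1 <= Cm T.-1.
Hypothesis C_s_last : C T.-1 (s T.-1) = C T.-1 (Cm T.-1) + K T.-1.
Hypothesis Ibar_last : Ibar T.-1 = s T.-1.
Hypothesis I_def : forall t, (t.+1 < T)%N ->
  grid_greatest theta (fun x => x < Num.min (Ibar t.+1 - theta) (Cm t)) (I t).
Hypothesis Ibar_def : forall t, (t.+1 < T)%N ->
  grid_greatest theta (fun x => x <= I t /\ C t x > C t (I t) + K t)
    (Ibar t - theta).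
Hypothesis H_last : forall y, H T.-1 y = C T.-1 y.
Hypothesis S_last : S T.-1 = Cm T.-1.
Hypothesis H_rec : forall t, (t.+1 < T)%N -> forall y,
  H t y = C t y + alpha * grid_sum theta (Vfun (H t.+1) (S t.+1) (s t.+1) (K t.+1))
                                   (f t) y.
Hypothesis S_def : forall t, (t.+1 < T)%N ->
  grid_greatest theta
    (fun x => (I t <= x <= SU t) /\
       (forall w, on_grid theta w -> I t <= w <= SU t -> H t x <= H t w)) (S t).
Hypothesis s_free : forall t, (t.+1 < T)%N -> K t = 0 -> s t = S t.
Hypothesis s_setup : forall t, (t.+1 < T)%N -> K t <> 0 ->
  grid_least theta (fun x => (Ibar t <= x <= S t) /\ H t x <= H t (S t) + K t) (s t).

Lemma I_bounds t : (t.+1 < T)%N ->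
  [/\ on_grid theta (I t), I t < Ibar t.+1 - theta & I t < Cm t].
Proof. by move=> tT; case: (I_def tT) => gI; rewrite lt_min => /andP[]. Qed.

Lemma V_flat_below_I t y : (t.+1 < T)%N -> y <= I t + theta ->
  Vfun (H t.+1) (S t.+1) (s t.+1) (K t.+1) y = H t.+1 (S t.+1) + K t.+1.
Proof.
move=> tT yI; have [gI I_Ibar _] := I_bounds tT.
have [last|t2T] := eqVneq t.+2 T.
  have s_Ibar : s t.+1 = Ibar t.+1 by move: Ibar_last; rewrite -last /= => ->.
  by apply: Vfun_below; rewrite s_Ibar; lra.
have {}t2T : (t.+2 < T)%N by rewrite ltn_neqAle t2T tT.
have [gIbar [Ibar_I _] _] := Ibar_def t2T.
have := grid_gap theta_gt0 gI gIbar I_Ibar => I_gap.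
have [k0|k0] := eqVneq (K t.+1) 0.
  have [_ [/andP[I_S _] _] _] := S_def t2T.
  by rewrite s_free // k0; apply: Vfun_below_free; lra.
have [_ [/andP[Ibar_s _] _] _] := s_setup t2T (elimN eqP k0).
by apply: Vfun_below; lra.
Qed.

Lemma H_sub_C_flat t y1 y2 : (t.+1 < T)%N -> y1 <= I t -> y2 <= I t ->
  H t y1 - C t y1 = H t y2 - C t y2.
Proof.
move=> tT le1 le2; rewrite !H_rec // ![C t _ + _]addrC !addrK; congr (_ * _).
by apply: (grid_sum_flat theta_gt0) le1 le2 => x; exact: V_flat_below_I.
Qed.

(* Last stage: H = C is convex and s - theta < s <= Cm. *)
Lemma bound_last_stage : H T.-1 (s T.-1 - theta) >= H T.-1 (S T.-1) + K T.-1.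
Proof.
have T1 : (T.-1 < T)%N by rewrite ltn_predL.
rewrite !H_last S_last -C_s_last.
apply: (convex_nonincr_left (C_convex T1) (Cm_min T1)) => //.
by rewrite lerBlDr lerDl ltW.
Qed.

(* Without setup cost, s_t = S_t minimizes H_t over the grid points of
   [I_t, SU_t]; below I_t, H_t inherits monotonicity from C_t. *)
Lemma bound_free_stage t : (t.+1 < T)%N -> K t = 0 ->
  H t (s t - theta) >= H t (S t) + K t.
Proof.
move=> tT k0; have tT' : (t < T)%N by apply: ltnW.
have th := theta_gt0.
rewrite s_free // k0 addr0.
have [gI _ I_Cm] := I_bounds tT.
have [gS [/andP[I_S S_SU] S_min] _] := S_def tT.
have [I_Sth|Sth_I] := lerP (I t) (S t - theta).
  by apply: S_min; [exact: on_grid_sub | apply/andP; split; lra].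
have := grid_gap theta_gt0 (on_grid_sub gS) gI Sth_I => S_I.
have := H_sub_C_flat tT (_ : S t - theta <= I t) (_ : S t <= I t).
have := convex_nonincr_left (C_convex tT') (Cm_min tT')
          (_ : S t - theta <= S t) (_ : S t <= Cm t).
by lra.
Qed.

(* With setup cost, s_t is the least admissible grid point in [Ibar_t, S_t]:
   either s_t - theta was rejected, or s_t = Ibar_t and the cost jump defining
   Ibar_t exceeds K_t. *)
Lemma bound_setup_stage t : (t.+1 < T)%N -> K t <> 0 ->
  H t (s t - theta) >= H t (S t) + K t.
Proof.
move=> tT k0; have tT' : (t < T)%N by apply: ltnW.
have th := theta_gt0.
have [gs [/andP[Ibar_s s_S] _] s_least] := s_setup tT k0.
have [gIbar [Ibar_I C_jump] _] := Ibar_def tT.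
have [Ibar_sth|sth_Ibar] := lerP (Ibar t) (s t - theta).
  rewrite leNgt; apply/negP => below.
  have sth_S : s t - theta <= S t by lra.
  have := s_least _ (on_grid_sub gs) (conj (introT andP (conj Ibar_sth sth_S)) (ltW below)).
  by lra.
have gIbar' : on_grid theta (Ibar t) by rewrite -[Ibar t](subrK theta); exact: on_grid_add.
have := grid_gap theta_gt0 (on_grid_sub gs) gIbar' sth_Ibar => s_gap.
have -> : s t = Ibar t by apply/eqP; rewrite eq_le Ibar_s andbT; lra.
have [gI _ I_Cm] := I_bounds tT.
have [_ [/andP[I_S S_SU] S_min] _] := S_def tT.
have HS_HI : H t (S t) <= H t (I t).
  have I_SU : I t <= SU t by have := Cm_le_SU tT'; lra.
  by apply: S_min => //; rewrite lexx I_SU.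
have := H_sub_C_flat tT Ibar_I (lexx (I t)).
by lra.
Qed.

Lemma s_minus_theta_bound t : (t < T)%N -> H t (s t - theta) >= H t (S t) + K t.
Proof.
move=> tT; have [tT1|] := boolP (t.+1 < T)%N.
  have [k0|k0] := eqVneq (K t) 0; first exact: bound_free_stage.
  exact: (bound_setup_stage tT1 (elimN eqP k0)).
rewrite -leqNgt => Tt; have -> : t = T.-1 by lia.
exact: bound_last_stage.
Qed.

End Thresholds.

Theorem corollary4p1 (R : realType) (d : measure_display)
    (Om : measurableType d) (P : probability Om R)
    (T : nat) (alpha : R) (c K : nat -> R) (G : nat -> R -> R)
    (D : nat -> {RV P >-> R}) (theta : R)
    (Cm SU I Ibar S s : nat -> R) (n0 : nat -> int) (H : nat -> R -> R) :
  (* model *)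
  (2 <= T)%N ->
  0 < alpha <= 1 ->
  (forall t, (t < T)%N -> 0 <= K t) ->
  (forall t, (t < T)%N -> forall w, 0 <= D t w) ->
  (forall t, (t < T)%N -> ('E_P[D t])%E \is a fin_num) ->
  mutually_independent D T ->
  (* standing assumptions *)
  (forall t, (t < T)%N -> convex_fun (Cost alpha c G D t)) ->
  (forall t, (t < T)%N -> coercive (Cost alpha c G D t)) ->
  (forall t, (t.+1 < T)%N -> alpha * K t.+1 <= K t) ->
  (* grid construction *)
  0 < theta ->
  (forall t, (t < T)%N -> least_minimizer (Cost alpha c G D t) (Cm t)) ->
  (forall t, (t < T)%N ->
     zgrid theta (n0 t) < Cm t <= zgrid theta (n0 t + 1)) ->
  (forall t, (t < T)%N ->
     grid_least theta
       (fun x => Cm t <= x /\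
          Cost alpha c G D t x > Cost alpha c G D t (zgrid theta (n0 t)) + K t)
       (SU t)) ->
  s T.-1 <= Cm T.-1 ->
  Cost alpha c G D T.-1 (s T.-1) = Cost alpha c G D T.-1 (Cm T.-1) + K T.-1 ->
  Ibar T.-1 = s T.-1 ->
  (forall t, (t.+1 < T)%N ->
     grid_greatest theta (fun x => x < Num.min (Ibar t.+1 - theta) (Cm t)) (I t)) ->
  (forall t, (t.+1 < T)%N ->
     grid_greatest theta
       (fun x => x <= I t /\
          Cost alpha c G D t x > Cost alpha c G D t (I t) + K t)
       (Ibar t - theta)) ->
  (forall y, H T.-1 y = Cost alpha c G D T.-1 y) ->
  S T.-1 = Cm T.-1 ->
  (forall t, (t.+1 < T)%N -> forall y,
     H t y = Cost alpha c G D t y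
             + alpha * grid_sum theta (Vfun (H t.+1) (S t.+1) (s t.+1) (K t.+1))
                                 (fgrid theta (distr_fun (D t))) y) ->
  (forall t, (t.+1 < T)%N ->
     grid_greatest theta
       (fun x => (I t <= x <= SU t) /\
          (forall w, on_grid theta w -> I t <= w <= SU t -> H t x <= H t w))
       (S t)) ->
  (forall t, (t.+1 < T)%N -> K t = 0 -> s t = S t) ->
  (forall t, (t.+1 < T)%N -> K t <> 0 ->
     grid_least theta
       (fun x => (Ibar t <= x <= S t) /\ H t x <= H t (S t) + K t)
       (s t)) ->
  (* conclusion *)
  forall t, (t < T)%N -> H t (s t - theta) >= H t (S t) + K t.
Proof.
move=> T2 _ _ _ _ _ C_convex _ _ theta_gt0 C_min _ SU_def.
have T_gt0 : (0 < T)%N by apply: leq_trans T2.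
have Cm_min t : (t < T)%N -> forall z, Cost alpha c G D t (Cm t) <= Cost alpha c G D t z.
  by move=> tT; have [] := C_min t tT.
have Cm_le_SU t : (t < T)%N -> Cm t <= SU t.
  by move=> tT; have [_ []] := SU_def t tT.
exact: (s_minus_theta_bound T_gt0 theta_gt0 C_convex Cm_min Cm_le_SU).
Qed.
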